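(* Let $G$ be the corresponding graph of an array $A$ with reach one, and let $F$ be a resulting DFS forest of $G$. Let $H'$ be obtained by merging the sub-trees of $F$; let $H_1,R_1$ be the graph and root list produced by the merge step on $H'$ with the list of roots of $F$, and $F_1$ the resulting DFS forest of $H_1$ with visiting list $R_1$; for $i>1$ let $H_i,R_i$ be produced by the merge step on $F_{i-1}$ with root list $R_{i-1}$, and $F_i$ the resulting DFS forest of $H_i$ with visiting list $R_i$. Then there exists a finite $i$ such that $F_i$ has exactly one component, i.e. is a tree (if $F$ itself has one component, $F$ is already such a tree).
   Context: An array is a finite sequence $A=(A[1],\dots,A[n])$ of pairwise distinct real numbers. A comparison graph on $A$ is a directed graph on $\{1,\dots,n\}$ all of whose arcs $(u,v)$ satisfy $A[u]<A[v]$. The corresponding graph of $A$ with reach one has an arc $(i,j)$ whenever $j\equiv i\pm1\pmod n$, $j\ne i$, and $A[i]<A[j]$. Components are connected components of the underlying undirected graph. DFS: adjacency lists sorted in increasing $A$-value; given a visiting list $(l_1,\dots,l_m)$ (for $F$, some ordering of all vertices), for each unvisited $l_t$ call Visit$(l_t)$, where Visit$(u)$ marks $u$ and, for each out-neighbour $w$ of $u$ in increasing $A$-value that is unvisited, sets parent$(w)=u$ and calls Visit$(w)$. The resulting DFS forest has arcs $(\mathrm{parent}(w),w)$; its roots are the vertices without parent. Merging the sub-trees of $F$: for each component of $F$ whose root has exactly two children $a_1,b_1$, set $p=a_1,q=b_1$ and, while both are defined: if $A[p]<A[q]$ add $(p,q)$ and replace $p$ by its smallest-valued child in $F$ (undefined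 if none); else add $(q,p)$ and replace $q$ likewise. Component merge of components $C,D$: set $p,q$ to the minimum-valued vertices of $C,D$; while both defined: if $A[p]<A[q]$ add $(p,q)$ and replace $p$ by the smallest-valued out-neighbour of $p$ within $C$ (ignoring arcs added in this merge; undefined if none); else add $(q,p)$ and replace $q$ analogously in $D$. Merge step with root list $(\rho_1,\dots,\rho_k)$ (the minimum-valued vertices of the components): component-merge the components of $\rho_{2j-1},\rho_{2j}$ for $j=1,\dots,\lfloor k/2\rfloor$ and return the list obtained by deleting the larger-valued root of each merged pair. *)

From mathcomp Require Import all_boot all_order all_algebra.
Set Implicit Arguments. Unset Strict Implicit. Unset Printing Implicit Defensive.
Import Order.TTheory GRing.Theory Num.Theory.
Local Open Scope ring_scope.

Section ArrayGraphs.
Variables (R : realFieldType) (n : nat) (A : 'I_n -> R).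

(* a directed graph on {0,..,n-1} (vertex i stands for position i+1) *)
Definition graph := rel 'I_n.

Definition reach_one_graph : graph := fun i j =>
  [&& i != j,
      (val j == (val i).+1 %% n)%N || (val i == (val j).+1 %% n)%N &
      A i < A j].

Definition sortA (s : seq 'I_n) : seq 'I_n := sort (fun x y => A x <= A y) s.

Definition out_nbrs (g : graph) (u : 'I_n) : seq 'I_n :=
  sortA [seq w <- enum 'I_n | g u w].

(* a forest is given by its parent function; arcs are (parent w, w) *)
Definition forest := 'I_n -> option 'I_n.

Definition forest_graph (F : forest) : graph := fun u w => F w == Some u.

Definition usym (g : graph) : graph := fun x y => g x y || g y x.

Definition one_component (F : forest) : Prop :=
  forall x y, connect (usym (forest_graph F)) x y.

Record dfs_state := DS { visited : seq 'I_n; par : forest }.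

Fixpoint visit (g : graph) (fuel : nat) (u : 'I_n) (st : dfs_state) : dfs_state :=
  match fuel with
  | 0 => st
  | f.+1 =>
    foldl (fun st w =>
             if w \in visited st then st
             else visit g f w (DS (visited st)
                                  (fun x => if x == w then Some u else par st x)))
          (DS (u :: visited st) (par st)) (out_nbrs g u)
  end.

(* resulting DFS forest of g with visiting list l
   (fuel n.+1 exceeds the maximal recursion depth n) *)
Definition dfs_forest (g : graph) (l : seq 'I_n) : forest :=
  par (foldl (fun st v => if v \in visited st then st else visit g n.+1 v st)
             (DS [::] (fun _ => None)) l).

Definition roots_in (l : seq 'I_n) (F : forest) : seq 'I_n :=
  [seq v <- l | F v == None].

Definition add_arc (g : graph) (p q : 'I_n) : graph :=
  fun x y => g x y || ((x == p) && (y == q)).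

(* the common "while both p and q are defined" loop; nextp/nextq give the
   replacement of p/q (None = undefined).  Fuel 2n+1 exceeds the number of
   iterations, since every replacement strictly increases the A-value. *)
Fixpoint zip_merge (nextp nextq : 'I_n -> option 'I_n) (fuel : nat)
    (p q : 'I_n) (g : graph) : graph :=
  match fuel with
  | 0 => g
  | f.+1 =>
    if A p < A q then
      let g' := add_arc g p q in
      match nextp p with Some p' => zip_merge nextp nextq f p' q g' | None => g' end
    else
      let g' := add_arc g q p in
      match nextq q with Some q' => zip_merge nextp nextq f p q' g' | None => g' end
  end.

Definition merge_fuel := ((n.*2).+1)%N.

Definition children (F : forest) (p : 'I_n) : seq 'I_n :=
  sortA [seq w <- enum 'I_n | F w == Some p].

Definition smallest_child (F : forest) (p : 'I_n) : option 'I_n :=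
  ohead (children F p).

Definition merge_subtrees (F : forest) : graph :=
  foldl (fun g r =>
           if F r is None then
             if children F r is [:: a1; b1] then
               zip_merge (smallest_child F) (smallest_child F) merge_fuel a1 b1 g
             else g
           else g)
        (forest_graph F) (enum 'I_n).

Definition comp_of (g : graph) (x : 'I_n) : seq 'I_n :=
  [seq y <- enum 'I_n | connect (usym g) x y].

Definition min_vertex (g : graph) (x : 'I_n) : 'I_n := head x (sortA (comp_of g x)).

(* smallest-valued out-neighbour of x within C (arcs of g0, i.e. ignoring
   arcs added during the merge) *)
Definition next_within (g0 : graph) (C : seq 'I_n) (x : 'I_n) : option 'I_n :=
  ohead [seq w <- out_nbrs g0 x | w \in C].

Definition component_merge (g0 : graph) (rho sigma : 'I_n) (g : graph) : graph :=
  zip_merge (next_within g0 (comp_of g0 rho)) (next_within g0 (comp_of g0 sigma))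
            merge_fuel (min_vertex g0 rho) (min_vertex g0 sigma) g.

Fixpoint merge_pairs (g0 : graph) (rs : seq 'I_n) (g : graph) : graph * seq 'I_n :=
  match rs with
  | r1 :: r2 :: rs' =>
    let res := merge_pairs g0 rs' (component_merge g0 r1 r2 g) in
    (res.1, (if A r1 < A r2 then r1 else r2) :: res.2)
  | _ => (g, rs)
  end.

Definition merge_step (g0 : graph) (rs : seq 'I_n) : graph * seq 'I_n :=
  merge_pairs g0 rs g0.

Definition round1 (F : forest) (rs : seq 'I_n) : forest * seq 'I_n :=
  let HR := merge_step (merge_subtrees F) rs in (dfs_forest HR.1 HR.2, HR.2).

Definition next_round (FR : forest * seq 'I_n) : forest * seq 'I_n :=
  let HR := merge_step (forest_graph FR.1) FR.2 in (dfs_forest HR.1 HR.2, HR.2).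

(* (F_i, R_i) for i >= 1 *)
Definition round (F : forest) (rs : seq 'I_n) (i : nat) : forest * seq 'I_n :=
  iter i.-1 next_round (round1 F rs).

End ArrayGraphs.

From mathcomp Require Import all_boot all_order all_algebra zify.
Set Implicit Arguments. Unset Strict Implicit. Unset Printing Implicit Defensive.
Import Order.TTheory GRing.Theory Num.Theory.
Local Open Scope ring_scope.

(* Say that a graph g is rooted by a duplicate-free list rs when its arcs
   increase A, every vertex is connected (ignoring directions) to some root,
   and every root reaches its whole component along arcs.  Since A is
   injective, two roots in one component reach each other and so coincide:
   rs lists one root per component.  The first DFS forest is rooted by its
   roots; merging sub-trees only adds increasing arcs inside components; a
   merge step joins the components of consecutive roots and the smaller root
   reaches both, so the ceil(k/2) winners root the new graph; and a DFS from
   them gives a forest rooted by them again.  After k rounds one root, hence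
   one component, is left. *)

Lemma seq_ind2 (T : Type) (P : seq T -> Prop) :
  P [::] -> (forall x, P [:: x]) -> (forall x y s, P s -> P [:: x, y & s]) ->
  forall s, P s.
Proof.
move=> P0 P1 P2 s; suff [] : P s /\ forall x, P (x :: s) by [].
by elim: s => [|x s [Ps Pxs]]; split=> // y; apply: P2.
Qed.

Lemma uniq_flatten_mem_eq (T : eqType) (ss : seq (seq T)) s s' x :
  uniq (flatten ss) -> s \in ss -> s' \in ss -> x \in s -> x \in s' -> s = s'.
Proof.
elim: ss => [|s0 ss IH] //=; rewrite cat_uniq => /and3P[_ disj uss].
have notin_rest t : t \in ss -> x \in t -> x \in s0 -> False.
  move=> tss xt xs0; move/hasP: disj; apply; exists x => //.
  by apply/flattenP; exists t.
rewrite !inE => /predU1P[->|sss] /predU1P[->|s'ss] xs xs' //.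
- by case: (notin_rest _ s'ss xs' xs).
- by case: (notin_rest _ sss xs xs').
- exact: IH.
Qed.

Lemma iter_uphalf_eq1 m k : (0 < k)%N -> (k <= m.+1)%N -> iter m uphalf k = 1%N.
Proof.
elim: m k => [|m IH] k k_gt0 k_le; first by apply/eqP; rewrite eqn_leq k_le.
by rewrite iterSr; apply: IH; rewrite ?uphalf_gt0 // uphalfE -divn2; lia.
Qed.

Section Connect.
Variable T : finType.
Implicit Types (e : rel T) (a : pred T).

Lemma connect_fwd_closed e a :
  (forall x y, e x y -> a x -> a y) -> forall x y, connect e x y -> a x -> a y.
Proof.
move=> a_cl x y /connectP[p]; elim: p x => [|z p IH] x /=; first by move=> _ ->.
by case/andP=> exz pz yl ax; apply: IH pz yl (a_cl _ _ exz ax).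
Qed.

Lemma connect_homo d (U : porderType d) e (f : T -> U) :
  {homo f : x y / e x y >-> (x <= y)%O} ->
  {homo f : x y / connect e x y >-> (x <= y)%O}.
Proof.
move=> hf x y cxy.
apply: (connect_fwd_closed (a := fun z => f x <= f z)%O) cxy _ => //.
by move=> u v /hf fuv fxu; apply: le_trans fuv.
Qed.

Lemma connect_no_in_arc e x y : (forall z, ~~ e z y) -> connect e x y -> x = y.
Proof.
move=> no_in /connectP[p]; case/lastP: p => [|p z] /=; first by move=> _ ->.
rewrite rcons_path last_rcons => /andP[_ ez] zy.
by move: (no_in (last x p)); rewrite zy ez.
Qed.

Lemma connect_subrel e e' : subrel e e' -> subrel (connect e) (connect e').
Proof. by move=> ee'; apply: connect_sub => x y /ee' /connect1. Qed.

End Connect.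

Section Undirected.
Variable n : nat.
Implicit Types g : graph n.

Lemma usym_sym g : symmetric (usym g).
Proof. by move=> x y; rewrite /usym orbC. Qed.

Lemma connect_usymC g : connect_sym (usym g).
Proof. exact/sym_connect_sym/usym_sym. Qed.

Lemma subrel_usym g : subrel g (usym g).
Proof. by move=> x y gxy; rewrite /usym gxy. Qed.

Lemma usym_subrel g g' : subrel g g' -> subrel (usym g) (usym g').
Proof. by move=> gg' x y /orP[/gg'|/gg'] h; rewrite /usym h ?orbT. Qed.

Lemma connect_usym g : subrel (connect g) (connect (usym g)).
Proof. exact/connect_subrel/subrel_usym. Qed.

Lemma connect_usym_eq g (T : eqType) (f : 'I_n -> T) :
  (forall x y, g x y -> f x = f y) -> forall x y, connect (usym g) x y -> f x = f y.
Proof.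
move=> gf x y cxy; apply/eqP.
apply: (connect_fwd_closed (a := fun z => f x == f z)) cxy _ => //.
by move=> u v /orP[] /gf ->.
Qed.

Lemma mem_comp_of g r z : (z \in comp_of g r) = connect (usym g) r z.
Proof. by rewrite mem_filter mem_enum andbT. Qed.

End Undirected.

Section Rooted.
Variables (R : realFieldType) (n : nat) (A : 'I_n -> R).
Hypothesis injA : injective A.
Implicit Types (g : graph n) (rs : seq 'I_n).

Definition rooted g rs :=
  [/\ {homo A : x y / g x y >-> x <= y},
      forall v, exists2 r, r \in rs & connect (usym g) r v,
      {in rs, forall r v, connect (usym g) r v -> connect g r v} &
      uniq rs].

Lemma rooted_roots_eq g rs : rooted g rs ->
  {in rs &, forall r r', connect (usym g) r r' -> r = r'}.
Proof.
case=> g_homo _ reach _ r r' rs_r rs_r' c; apply: injA; apply: le_anti.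
rewrite (connect_homo g_homo (reach r rs_r _ c)) /=.
by apply: (connect_homo g_homo); apply: reach rs_r' _ _; rewrite connect_usymC.
Qed.

Lemma rooted_min_vertex g rs : rooted g rs -> {in rs, forall r, min_vertex A g r = r}.
Proof.
case=> g_homo _ reach _ r rs_r; rewrite /min_vertex /sortA.
set s := sort _ _.
have le_r h : h \in s -> A r <= A h.
  by rewrite mem_sort mem_comp_of => /(reach r rs_r); apply: connect_homo.
have : r \in s by rewrite mem_sort mem_comp_of.
have : sorted (fun x y => A x <= A y) s.
  exact: sort_sorted (fun x y => le_total (A x) (A y)) _.
case: s le_r => [|h t] //= le_r sorted_ht s_r.
apply: injA; apply: le_anti; rewrite le_r ?mem_head // andbT.
case/predU1P: s_r => [<-//|t_r].
have le_trans_A : transitive (fun x y => A x <= A y).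
  by move=> y x z; apply: le_trans.
by move/(order_path_min le_trans_A)/allP: sorted_ht; apply.
Qed.

Lemma rooted_size1_connected g rs : rooted g rs -> size rs = 1%N ->
  forall x y, connect (usym g) x y.
Proof.
case: rs => [|r [|]] // [_ cover _ _] _ x y.
have [r1 /[!inE] /eqP -> rx] := cover x; have [r2 /[!inE] /eqP -> ry] := cover y.
by apply: connect_trans ry; rewrite connect_usymC.
Qed.

Lemma rooted_size_gt0 g rs : (0 < n)%N -> rooted g rs -> (0 < size rs)%N.
Proof. by move=> n_gt0 [_ /(_ (Ordinal n_gt0)) [r]]; case: rs. Qed.

Lemma zip_merge_subrel np nq f p q g : subrel g (zip_merge A np nq f p q g).
Proof.
elim: f p q g => [|f IH] p q g //= x y gxy.
have add_gxy h h' : add_arc g h h' x y by rewrite /add_arc gxy.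
by case: ifP => _; [case: (np p) | case: (nq q)] => *; rewrite ?IH.
Qed.

Definition winner r1 r2 := if A r1 < A r2 then r1 else r2.

Lemma zip_merge_winner_connect np nq f p q g : (0 < f)%N ->
  {in [:: p; q], forall z, connect (zip_merge A np nq f p q g) (winner p q) z}.
Proof.
case: f => // f _ z; rewrite /winner !inE /=.
have arc_pq h h' : add_arc g h h' h h' by rewrite /add_arc !eqxx orbT.
by case: ifP => _ /orP[] /eqP ->;
  rewrite ?connect0 //; apply: connect1;
  [case: (np p) | case: (nq q)] => *; rewrite ?zip_merge_subrel.
Qed.

Lemma zip_merge_arcs np nq (Cp Cq : pred 'I_n) f p q g :
  (forall x y, Cp x -> np x = Some y -> Cp y) ->
  (forall x y, Cq x -> nq x = Some y -> Cq y) ->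
  Cp p -> Cq q ->
  forall x y, zip_merge A np nq f p q g x y ->
    g x y \/ (A x <= A y /\ (Cp x /\ Cq y \/ Cq x /\ Cp y)).
Proof.
move=> np_C nq_C; elim: f p q g => [|f IH] p q g /= Cp_p Cq_q x y; first by left.
have add_arc_arcs h h' : A h <= A h' -> Cp h /\ Cq h' \/ Cq h /\ Cp h' ->
    add_arc g h h' x y -> g x y \/ (A x <= A y /\ (Cp x /\ Cq y \/ Cq x /\ Cp y)).
  by move=> le_hh' C /orP[|/andP[/eqP-> /eqP->]]; [left | right].
case: ifP => [lt_pq|ge_pq].
  have arcs := add_arc_arcs p q (ltW lt_pq) (or_introl (conj Cp_p Cq_q)).
  case E: (np p) => [p'|]; last exact: arcs.
  by case/(IH p' q _ (np_C _ _ Cp_p E) Cq_q) => [/arcs|]; last right.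
have le_qp : A q <= A p by rewrite leNgt ge_pq.
have arcs := add_arc_arcs q p le_qp (or_intror (conj Cq_q Cp_p)).
case E: (nq q) => [q'|]; last exact: arcs.
by case/(IH p q' _ Cp_p (nq_C _ _ Cq_q E)) => [/arcs|]; last right.
Qed.

Lemma children_parent F p c : c \in children A F p -> F c = Some p.
Proof. by rewrite /children /sortA mem_sort mem_filter => /andP[/eqP]. Qed.

Lemma smallest_child_parent F p c : smallest_child A F p = Some c -> F c = Some p.
Proof.
rewrite /smallest_child; case E: (children A F p) => [|z s] //= [<-].
by apply: children_parent; rewrite E mem_head.
Qed.

Lemma merge_subtrees_arcs F :
  subrel (forest_graph F) (merge_subtrees A F) /\
  forall x y, merge_subtrees A F x y -> forest_graph F x y \/
    (A x <= A y /\ connect (usym (forest_graph F)) x y).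
Proof.
pose fg := forest_graph F.
pose inv g := subrel fg g /\ forall x y, g x y ->
  fg x y \/ (A x <= A y /\ connect (usym fg) x y).
suff : inv (merge_subtrees A F) by [].
have : inv (forest_graph F) by split=> // x y; left.
rewrite /merge_subtrees; elim: (enum 'I_n) (forest_graph F) => [//|r s IH] g [sub arcs].
apply: IH; case: (F r) => [//|].
case E: (children A F r) => [|a1 [|b1 [|? ?]]] //.
pose C := connect (usym fg) r.
have C_child x y : C x -> smallest_child A F x = Some y -> C y.
  move=> Cx /smallest_child_parent Fy; apply: connect_trans Cx _.
  by apply/connect1/subrel_usym; rewrite /fg /forest_graph Fy.
have C_children c : c \in children A F r -> C c.
  by move/children_parent=> Fc; apply/connect1/subrel_usym; rewrite /fg /forest_graph Fc.
have C_a1 : C a1 by apply: C_children; rewrite E mem_head.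
have C_b1 : C b1 by apply: C_children; rewrite E !inE eqxx orbT.
split=> [x y /sub|x y]; first exact: zip_merge_subrel.
case/(zip_merge_arcs C_child C_child C_a1 C_b1) => [/arcs //|[le_xy Cxy]].
right; split=> //; have [] : C x /\ C y by case: Cxy => -[].
by rewrite /C connect_usymC => rx; apply: connect_trans.
Qed.

Lemma rooted_merge_subtrees F rs :
  rooted (forest_graph F) rs -> rooted (merge_subtrees A F) rs.
Proof.
case=> F_homo cover reach uniq_rs; have [sub arcs] := merge_subtrees_arcs F.
have conn_back : subrel (connect (usym (merge_subtrees A F)))
                        (connect (usym (forest_graph F))).
  have back x y : merge_subtrees A F x y -> connect (usym (forest_graph F)) x y.
    by case/arcs => [/subrel_usym/connect1|[]].
  by apply: connect_sub => x y /orP[/back //|/back]; rewrite connect_usymC.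
split=> //.
- by move=> x y /arcs [/F_homo|[]].
- move=> v; have [r rs_r c] := cover v; exists r => //.
  exact: connect_subrel (usym_subrel sub) _ _ c.
- by move=> r rs_r v /conn_back /(reach r rs_r) /(connect_subrel sub).
Qed.

Fixpoint root_pairs rs : seq ('I_n * seq 'I_n) :=
  match rs with
  | r1 :: r2 :: rs' => (winner r1 r2, [:: r1; r2]) :: root_pairs rs'
  | [:: r] => [:: (r, [:: r])]
  | [::] => [::]
  end.

Lemma flatten_root_pairs rs : flatten [seq wG.2 | wG <- root_pairs rs] = rs.
Proof. by elim/seq_ind2: rs => //= r1 r2 rs ->. Qed.

Lemma winner_in_pair rs : {in root_pairs rs, forall wG, wG.1 \in wG.2}.
Proof.
elim/seq_ind2: rs => [|r|r1 r2 rs IH] wG //=.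
  by rewrite inE => /eqP -> /=; rewrite inE.
by case/predU1P => [-> /=|/IH //]; rewrite /winner !inE; case: ifP; rewrite eqxx ?orbT.
Qed.

Lemma size_root_pairs rs : size (root_pairs rs) = uphalf (size rs).
Proof. by elim/seq_ind2: rs => //= r1 r2 rs ->. Qed.

Lemma subseq_winners rs : subseq [seq wG.1 | wG <- root_pairs rs] rs.
Proof.
elim/seq_ind2: rs => [|r|r1 r2 rs IH]; try by rewrite /= ?eqxx.
rewrite [root_pairs _]/= map_cons -cat1s -[[:: r1, r2 & rs]]/([:: r1; r2] ++ rs).
by apply: cat_subseq IH; rewrite sub1seq /winner; case: ifP; rewrite !inE eqxx ?orbT.
Qed.

Lemma mem_root_pairs rs wG r : wG \in root_pairs rs -> r \in wG.2 -> r \in rs.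
Proof.
move=> wG_in r_in; rewrite -[rs]flatten_root_pairs; apply/flattenP.
by exists wG.2; rewrite ?map_f.
Qed.

Lemma pair_of_root rs r : r \in rs -> exists2 wG, wG \in root_pairs rs & r \in wG.2.
Proof.
by rewrite -{1}[rs]flatten_root_pairs => /flattenP[G /mapP[wG wG_in ->]]; exists wG.
Qed.

Lemma next_within_mem g0 C x y : next_within A g0 C x = Some y -> y \in C.
Proof.
rewrite /next_within; have : all (mem C) [seq w <- out_nbrs A g0 x | w \in C].
  exact: filter_all.
by case: (filter _ _) => //= z s /andP[z_in _] [<-].
Qed.

Definition in_components g0 (G : seq 'I_n) z := has (fun r => connect (usym g0) r z) G.

Section MergePairs.
Variable g0 : graph n.

Lemma merge_pairs_roots rs g :
  (merge_pairs A g0 rs g).2 = [seq wG.1 | wG <- root_pairs rs].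
Proof. by elim/seq_ind2: rs g => //= r1 r2 rs IH g; rewrite IH. Qed.

Lemma merge_pairs_subrel rs g : subrel g (merge_pairs A g0 rs g).1.
Proof.
elim/seq_ind2: rs g => [|r|r1 r2 rs IH] g x y gxy //.
by apply: IH; apply: zip_merge_subrel.
Qed.

Lemma merge_pairs_winner_connect rs g : {in rs, forall r, min_vertex A g0 r = r} ->
  {in root_pairs rs, forall wG, {in wG.2, forall r,
     connect (merge_pairs A g0 rs g).1 wG.1 r}}.
Proof.
elim/seq_ind2: rs g => [|r|r1 r2 rs IH] g min_rs wG //.
  by rewrite inE => /eqP -> z /[!inE] /eqP ->.
have min_r1 := min_rs r1 (mem_head _ _).
have min_r2 : min_vertex A g0 r2 = r2 by apply: min_rs; rewrite !inE eqxx orbT.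
case/predU1P => [-> /= r r_in|].
  apply: (connect_subrel (@merge_pairs_subrel rs _)).
  by rewrite /component_merge min_r1 min_r2; apply: zip_merge_winner_connect.
by apply: IH => r rs_r; apply: min_rs; rewrite !inE rs_r !orbT.
Qed.

Lemma merge_pairs_arcs rs g : {in rs, forall r, min_vertex A g0 r = r} ->
  forall x y, (merge_pairs A g0 rs g).1 x y -> g x y \/ (A x <= A y /\
    exists2 wG, wG \in root_pairs rs &
      in_components g0 wG.2 x /\ in_components g0 wG.2 y).
Proof.
elim/seq_ind2: rs g => [||r1 r2 rs IH] g min_rs x y /=; try by left.
have min_r1 := min_rs r1 (mem_head _ _).
have min_r2 : min_vertex A g0 r2 = r2 by apply: min_rs; rewrite !inE eqxx orbT.
have min_rs' : {in rs, forall r, min_vertex A g0 r = r}.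
  by move=> r rs_r; apply: min_rs; rewrite !inE rs_r !orbT.
case/IH => // [|[le_xy [wG wG_in xy_in]]]; last first.
  by right; split=> //; exists wG; rewrite // inE wG_in orbT.
rewrite /component_merge min_r1 min_r2.
case/(zip_merge_arcs (Cp := fun z => z \in comp_of g0 r1)
                     (Cq := fun z => z \in comp_of g0 r2)).
- by move=> ? ? _; apply: next_within_mem.
- by move=> ? ? _; apply: next_within_mem.
- by rewrite mem_comp_of.
- by rewrite mem_comp_of.
- by left.
move=> [le_xy Cxy]; right; split=> //; exists (winner r1 r2, [:: r1; r2]).
  exact: mem_head.
rewrite /in_components /= !mem_comp_of in Cxy *.
by case: Cxy => -[-> ->]; rewrite ?orbT.
Qed.

End MergePairs.

Lemma in_components_pairs_eq g0 rs wG wG' x : rooted g0 rs ->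
  wG \in root_pairs rs -> wG' \in root_pairs rs ->
  in_components g0 wG.2 x -> in_components g0 wG'.2 x -> wG.2 = wG'.2.
Proof.
move=> rooted_rs wG_in wG'_in /hasP[r r_in rx] /hasP[r' r'_in r'x].
have rr' : r = r'.
  apply: (rooted_roots_eq rooted_rs (mem_root_pairs wG_in r_in)
                                    (mem_root_pairs wG'_in r'_in)).
  by apply: connect_trans rx _; rewrite connect_usymC.
subst r'; apply: (@uniq_flatten_mem_eq _ [seq G.2 | G <- root_pairs rs] _ _ r).
all: by rewrite ?map_f ?flatten_root_pairs //; case: rooted_rs.
Qed.

Lemma merge_step_components_closed g0 rs wG :
  rooted g0 rs -> wG \in root_pairs rs ->
  forall x y, connect (usym (merge_step A g0 rs).1) x y ->
    in_components g0 wG.2 x = in_components g0 wG.2 y.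
Proof.
move=> rooted_rs wG_in; apply: connect_usym_eq => x y.
case/(merge_pairs_arcs (rooted_min_vertex rooted_rs)).
  move=> g0xy; apply: eq_has.
  by apply: same_connect1r (connect_usymC g0) _ _ _; rewrite /usym g0xy.
move=> [_ [wG' wG'_in [x_in y_in]]].
have same_pair := in_components_pairs_eq rooted_rs wG_in wG'_in.
by apply/idP/idP => [/same_pair/(_ x_in) ->|/same_pair/(_ y_in) ->].
Qed.

Lemma rooted_merge_step g0 rs : rooted g0 rs ->
  rooted (merge_step A g0 rs).1 (merge_step A g0 rs).2 /\
  size (merge_step A g0 rs).2 = uphalf (size rs).
Proof.
move=> rooted_rs; have [g0_homo cover reach uniq_rs] := rooted_rs.
have min_rs := rooted_min_vertex rooted_rs.
have closed := merge_step_components_closed rooted_rs.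
rewrite /merge_step merge_pairs_roots size_map size_root_pairs; split=> //.
set g := (merge_pairs A g0 rs g0).1 in closed *.
have reach_pair wG r v : wG \in root_pairs rs -> r \in wG.2 ->
    connect (usym g0) r v -> connect g wG.1 v.
  move=> wG_in r_in rv.
  apply: connect_trans (merge_pairs_winner_connect g0 min_rs wG_in r_in) _.
  apply: (connect_subrel (@merge_pairs_subrel g0 rs g0)).
  exact: reach (mem_root_pairs wG_in r_in) _ rv.
split.
- by move=> x y /(merge_pairs_arcs min_rs) [/g0_homo|[]].
- move=> v; have [r rs_r rv] := cover v; have [wG wG_in r_in] := pair_of_root rs_r.
  exists wG.1; first exact: map_f.
  by apply/connect_usym; apply: reach_pair r_in rv.
- move=> _ /mapP[wG wG_in ->] v wv.
  have : in_components g0 wG.2 v.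
    rewrite -(closed wG wG_in _ _ wv).
    by apply/hasP; exists wG.1; [apply: (winner_in_pair wG_in) | apply: connect0].
  by case/hasP=> r r_in rv; apply: reach_pair r_in rv.
- exact: subseq_uniq (subseq_winners rs) uniq_rs.
Qed.

End Rooted.

Section DFS.
Variables (R : realFieldType) (n : nat) (A : 'I_n -> R) (g : graph n).
Implicit Types (st : dfs_state n) (l : seq 'I_n).

Lemma mem_out_nbrs u w : (w \in out_nbrs A g u) = g u w.
Proof. by rewrite /out_nbrs /sortA mem_sort mem_filter mem_enum andbT. Qed.

Lemma uniq_size_ord (s : seq 'I_n) : uniq s -> (size s <= n)%N.
Proof. by move=> /card_uniqP <-; rewrite -[X in (_ <= X)%N]card_ord max_card. Qed.

Definition fresh st st' x := (x \in visited st') && (x \notin visited st).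

(* Each nested call visits a new vertex, so the fuel never runs out. *)
Definition visit_pre fuel u st :=
  [/\ u \notin visited st, uniq (visited st), (n < fuel + size (visited st))%N &
      forall x, x \notin visited st -> x != u -> par st x = None].

(* Closedness is only claimed off [u]: during the loop over the out-neighbours
   of [u], some of them may still be unvisited. *)
Definition visit_inv u st st' :=
  [/\ {subset u :: visited st <= visited st'}, uniq (visited st'),
      forall x y, par st x = Some y -> par st' x = Some y,
      forall x, x \notin visited st' -> par st' x = None &
      [/\ forall x, fresh st st' x -> connect (forest_graph (par st')) u x,
          forall x y, par st' x = Some y -> par st x = Some y \/
            [/\ x != u, g y x, fresh st st' y & fresh st st' x] &
          forall x, fresh st st' x -> x != u -> forall w, g x w -> w \in visited st']].

Definition visit_post u st st' :=
  visit_inv u st st' /\ forall w, g u w -> w \in visited st'.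

Definition visit_child f u st w :=
  if w \in visited st then st
  else visit A g f w (DS (visited st) (fun x => if x == w then Some u else par st x)).

Lemma visitS f u st : visit A g f.+1 u st =
  foldl (visit_child f u) (DS (u :: visited st) (par st)) (out_nbrs A g u).
Proof. by []. Qed.

Lemma visit_inv_child u st st1 w st2 : u \notin visited st ->
  visit_inv u st st1 -> g u w -> w \notin visited st1 ->
  visit_post w (DS (visited st1) (fun x => if x == w then Some u else par st1 x)) st2 ->
  visit_inv u st st2.
Proof.
move=> u_new [grow1 _ keep1 orph1 [reach1 arcs1 closed1]] guw w_new.
move=> [[grow2 uniq2 keep2 orph2 [reach2 arcs2 closed2]] closed_w] /=.
have u_in1 : u \in visited st1 by apply: grow1; rewrite mem_head.
have grow12 : {subset visited st1 <= visited st2}.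
  by move=> x x_in; apply: grow2; rewrite inE x_in orbT.
have grow01 : {subset visited st <= visited st1}.
  by move=> x x_in; apply: grow1; rewrite inE x_in orbT.
have fresh12 x : fresh st st1 x -> fresh st st2 x.
  by rewrite /fresh => /andP[/grow12 -> ->].
have fresh02 x : x \in visited st2 -> x \notin visited st1 -> fresh st st2 x.
  by move=> x_in x_new; rewrite /fresh x_in (contra (grow01 x)).
have keep12 x y : par st1 x = Some y -> par st2 x = Some y.
  by move=> pxy; apply: keep2 => /=; case: eqP pxy => // ->; rewrite orph1.
have par2w : par st2 w = Some u by apply: keep2; rewrite /= eqxx.
have w_in2 : w \in visited st2 by apply: grow2; rewrite mem_head.
split=> //; first by move=> x /grow1 /grow12.
  by move=> x y /keep1 /keep12.
split.
- move=> x; case: (boolP (x \in visited st1)) => [x_in1|x_new1] /andP[x_in2 x_new].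
    apply: connect_subrel (reach1 x _); last by rewrite /fresh x_in1.
    by move=> a b /eqP /keep12 /eqP.
  apply: connect_trans (reach2 x _); last by rewrite /fresh x_in2.
  by apply: connect1; rewrite /forest_graph par2w.
- move=> x y /arcs2 [/=|[_ gyx /andP[y_in2 y_new1] /andP[x_in2 x_new1]]].
    case: eqP => [-> [<-]|_ /arcs1 [->|[xu gyx fy fx]]]; [right|by left|right].
      split; first by apply: contraNneq w_new => ->.
      - by [].
      - by rewrite /fresh grow12.
      - exact: fresh02.
    by split=> //; apply: fresh12.
  right; split; rewrite ?fresh02 //.
  by apply: contraNneq x_new1 => ->.
- move=> x /andP[x_in2 x_new] xu z gxz.
  case: (boolP (x \in visited st1)) => [x_in1|x_new1].
    by apply/grow12/(closed1 x _ xu z gxz); rewrite /fresh x_in1.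
  case: (eqVneq x w) => [xw|]; first by apply: closed_w; rewrite -xw.
  by move/(closed2 x); apply=> //; rewrite /fresh x_in2.
Qed.

Lemma visit_loop f u st ws st1 :
  (forall w st', visit_pre f w st' -> visit_post w st' (visit A g f w st')) ->
  visit_pre f.+1 u st -> {subset ws <= out_nbrs A g u} -> visit_inv u st st1 ->
  let st2 := foldl (visit_child f u) st1 ws in
  [/\ visit_inv u st st2, {subset ws <= visited st2} &
      {subset visited st1 <= visited st2}].
Proof.
move=> visit_ok [u_new uniq0 fuel_ok _].
elim: ws st1 => [|w ws IH] st1 ws_out inv1 /=; first by split.
have guw : g u w by rewrite -mem_out_nbrs ws_out ?mem_head.
pose st2 := visit_child f u st1 w.
have [inv2 w_in2 grow12] :
    [/\ visit_inv u st st2, w \in visited st2 & {subset visited st1 <= visited st2}].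
  rewrite /st2 /visit_child; case: ifP => [w_in1|/negbT w_new]; first by split.
  have [grow1 uniq1 _ orph1 _] := inv1.
  have size1 : (size (u :: visited st) <= size (visited st1))%N.
    by apply: uniq_leq_size grow1; rewrite /= u_new.
  have pre : visit_pre f w
      (DS (visited st1) (fun x => if x == w then Some u else par st1 x)).
    split=> //=; first by move: fuel_ok size1 => /=; lia.
    by move=> x x_new xw; rewrite (negbTE xw) orph1.
  have post := visit_ok w _ pre; have [[grow2 _ _ _ _] _] := post.
  split; first exact: visit_inv_child u_new inv1 guw w_new post.
    by apply: grow2; rewrite mem_head.
  by move=> x x_in; apply: grow2; rewrite inE x_in orbT.
have ws_out' : {subset ws <= out_nbrs A g u}.
  by move=> z z_in; rewrite ws_out // inE z_in orbT.
have [inv3 ws_in3 grow23] := IH st2 ws_out' inv2.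
split=> // z; first by case/predU1P => [->|/ws_in3 //]; apply: grow23.
by move/grow12/grow23.
Qed.

Lemma visit_spec fuel u st : visit_pre fuel u st -> visit_post u st (visit A g fuel u st).
Proof.
elim: fuel u st => [|f IH] u st pre.
  have [u_new uniq_st fuel_ok _] := pre.
  have := uniq_size_ord (s := u :: visited st); rewrite /= u_new uniq_st => /(_ isT).
  by rewrite ltnNge (ltnW fuel_ok).
have [u_new uniq_st _ orph] := pre.
have inv0 : visit_inv u st (DS (u :: visited st) (par st)).
  split=> //=; first by rewrite u_new.
    by move=> x; rewrite inE negb_or => /andP[xu x_new]; apply: orph.
  split.
  - by move=> x; rewrite /fresh inE => /andP[/predU1P[->|->]].
  - by move=> x y ->; left.
  - by move=> x; rewrite /fresh inE => /andP[/predU1P[->|->]]; rewrite ?eqxx.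
rewrite visitS; have [inv1 out_in _] := visit_loop IH pre (fun w h => h) inv0.
by split=> // w guw; apply: out_in; rewrite mem_out_nbrs.
Qed.

Definition dfs_start st v := if v \in visited st then st else visit A g n.+1 v st.

Definition dfs_inv l st :=
  [/\ uniq (visited st),
      forall x, x \notin visited st -> par st x = None,
      forall x y, par st x = Some y -> [/\ g y x, x \in visited st & y \in visited st],
      forall x, x \in visited st -> forall w, g x w -> w \in visited st &
      exists lab : 'I_n -> 'I_n, (forall x y, par st x = Some y -> lab y = lab x) /\
        forall v, v \in visited st -> [/\ lab v \in l, lab v \in visited st,
          par st (lab v) = None & connect (forest_graph (par st)) (lab v) v]].

Lemma dfs_start_inv l st v : v \in l -> dfs_inv l st ->
  [/\ dfs_inv l (dfs_start st v), v \in visited (dfs_start st v) &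
      {subset visited st <= visited (dfs_start st v)}].
Proof.
move=> v_l inv; rewrite /dfs_start; case: ifP => [v_in|/negbT v_new]; first by split.
have [uniq_st orph arcs closed [lab [lab_arc lab_spec]]] := inv.
have pre : visit_pre n.+1 v st.
  by split=> // [|x x_new _]; [rewrite addSn ltnS leq_addr | apply: orph].
have [[grow' uniq' keep' orph' [reach' arcs' closed']] closed_v] := visit_spec pre.
set st' := visit A g n.+1 v st in grow' uniq' keep' orph' reach' arcs' closed' closed_v *.
have grow : {subset visited st <= visited st'}.
  by move=> x x_in; apply: grow'; rewrite inE x_in orbT.
have v_in : v \in visited st' by apply: grow'; rewrite mem_head.
split=> //; split=> //.
- move=> x y /arcs' [/arcs [gyx x_in y_in]|[_ gyx /andP[y_in _] /andP[x_in _]]] //.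
  by split=> //; apply: grow.
- move=> x x_in w gxw; case: (boolP (x \in visited st)) => [x_old|x_new].
    exact/grow/(closed x x_old w gxw).
  case: (eqVneq x v) => [xv|xv]; first by apply: closed_v; rewrite -xv.
  by apply: closed' xv w gxw; rewrite /fresh x_in.
exists (fun x => if x \in visited st then lab x else v); split.
  move=> x y /arcs' [pxy|[_ _ /andP[_ /negbTE ->] /andP[_ /negbTE ->]]] //.
  by have [_ -> ->] := arcs _ _ pxy; apply: lab_arc.
move=> w w_in; case: ifP => [w_old|/negbT w_new].
  have [l_lab old_lab root_lab reach_lab] := lab_spec w w_old; split=> //.
  - exact: grow.
  - case E: (par st' (lab w)) => [y|//].
    by case/arcs': E => [|[_ _ _ /andP[_]]]; rewrite ?root_lab ?old_lab.
  - by apply: connect_subrel reach_lab => a b /eqP /keep' /eqP.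
split=> //.
- case E: (par st' v) => [y|//].
  by case/arcs': E => [|[]]; rewrite ?orph ?eqxx.
- by apply: reach'; rewrite /fresh w_in.
Qed.

Lemma dfs_fold_inv l s st : {subset s <= l} -> dfs_inv l st ->
  let st' := foldl dfs_start st s in
  [/\ dfs_inv l st', {subset s <= visited st'} & {subset visited st <= visited st'}].
Proof.
elim: s st => [|v s IH] st s_l inv /=; first by split.
have [inv1 v_in1 grow1] := dfs_start_inv (s_l v (mem_head _ _)) inv.
have s_l' : {subset s <= l} by move=> z z_in; rewrite s_l // inE z_in orbT.
have [inv2 s_in2 grow2] := IH _ s_l' inv1.
split=> // z; first by case/predU1P => [->|/s_in2 //]; apply: grow2.
by move/grow1/grow2.
Qed.

Lemma dfs_forest_spec l : (forall v, exists2 r, r \in l & connect g r v) ->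
  let F := dfs_forest A g l in
  (forall x y, F x = Some y -> g y x) /\
  exists lab : 'I_n -> 'I_n,
    (forall x y, connect (usym (forest_graph F)) x y -> lab x = lab y) /\
    forall v, [/\ lab v \in l, F (lab v) = None & connect (forest_graph F) (lab v) v].
Proof.
move=> reach F; have inv0 : dfs_inv l (DS [::] (fun _ => None)) by split=> //; exists id.
have [[_ _ arcs closed [lab [lab_arc lab_spec]]] l_in _] :=
  dfs_fold_inv (fun x h => h) inv0.
have -> : F = par (foldl dfs_start (DS [::] (fun _ => None)) l) by [].
set st := foldl _ _ _ in arcs closed lab_arc lab_spec l_in *.
have all_in v : v \in visited st.
  have [r r_l rv] := reach v.
  exact: connect_fwd_closed (fun x y gxy x_in => closed x x_in y gxy) _ _ rv (l_in r r_l).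
split; first by move=> x y /arcs[].
exists lab; split; last by move=> v; have [] := lab_spec v (all_in v).
by apply: connect_usym_eq => x y /eqP /lab_arc.
Qed.

End DFS.

Section Rounds.
Variables (R : realFieldType) (n : nat) (A : 'I_n -> R).

Lemma rooted_dfs_reach_one l : perm_eq l (enum 'I_n) ->
  let F := dfs_forest A (reach_one_graph A) l in
  rooted A (forest_graph F) (roots_in l F).
Proof.
move=> l_perm F; have l_all v : v \in l by rewrite (perm_mem l_perm) mem_enum.
have reach_l v : exists2 r, r \in l & connect (reach_one_graph A) r v by exists v.
have [F_g [lab [lab_conn lab_spec]]] := dfs_forest_spec A reach_l.
rewrite -/F in F_g lab_conn lab_spec.
have lab_root r : F r = None -> lab r = r.
  move=> Fr; have [_ _] := lab_spec r; apply: connect_no_in_arc => z.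
  by rewrite /forest_graph Fr.
split.
- by move=> x y /eqP /F_g /and3P[_ _ /ltW].
- move=> v; have [l_lab root_lab reach_lab] := lab_spec v.
  by exists (lab v); [rewrite mem_filter root_lab eqxx | apply: connect_usym].
- move=> r; rewrite mem_filter => /andP[/eqP Fr _] v /lab_conn.
  by rewrite lab_root // => ->; case: (lab_spec v).
- by rewrite filter_uniq // (perm_uniq l_perm) enum_uniq.
Qed.

Hypothesis injA : injective A.

Lemma rooted_dfs_forest g rs : rooted A g rs ->
  rooted A (forest_graph (dfs_forest A g rs)) rs.
Proof.
move=> rooted_rs; have [g_homo cover reach uniq_rs] := rooted_rs.
have reach_rs v : exists2 r, r \in rs & connect g r v.
  by have [r rs_r rv] := cover v; exists r; last exact: reach.
have [F_g [lab [lab_conn lab_spec]]] := dfs_forest_spec A reach_rs.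
set F := dfs_forest A g rs in F_g lab_conn lab_spec *.
have Fg : subrel (forest_graph F) g by move=> x y /eqP /F_g.
have lab_root r : r \in rs -> lab r = r.
  move=> rs_r; have [l_lab _ reach_lab] := lab_spec r.
  apply: (rooted_roots_eq injA rooted_rs) => //.
  exact/connect_usym/(connect_subrel Fg).
split=> //.
- by move=> x y /Fg /g_homo.
- move=> v; have [l_lab _ reach_lab] := lab_spec v.
  by exists (lab v); last apply: connect_usym.
- move=> r rs_r v /lab_conn; rewrite lab_root // => ->.
  by case: (lab_spec v).
Qed.

Lemma rooted_round F rs i : rooted A (merge_subtrees A F) rs -> (0 < i)%N ->
  rooted A (forest_graph (round A F rs i).1) (round A F rs i).2 /\
  size (round A F rs i).2 = iter i uphalf (size rs).
Proof.
move=> rooted_rs; case: i => // i _; rewrite /round /=.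
elim: i => [|i [rooted_i size_i]].
  have [rooted1 size1] := rooted_merge_step injA rooted_rs.
  by split; [apply: rooted_dfs_forest | rewrite /= size1].
rewrite iterS [iter i.+1 _ _]iterS -size_i.
have [rooted' size'] := rooted_merge_step injA rooted_i.
by split; [apply: rooted_dfs_forest | rewrite /= size'].
Qed.

End Rounds.

Theorem corollary5 (R : realFieldType) (n : nat) (A : 'I_n -> R)
    (l : seq 'I_n) :
  (0 < n)%N -> injective A -> perm_eq l (enum 'I_n) ->
  let F := dfs_forest A (reach_one_graph A) l in
  one_component F \/
  exists i : nat, (0 < i)%N /\ one_component (round A F (roots_in l F) i).1.
Proof.
move=> n_gt0 injA l_perm F; right.
have rooted_F : rooted A (forest_graph F) (roots_in l F).
  exact: rooted_dfs_reach_one.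
have k_gt0 := rooted_size_gt0 n_gt0 rooted_F.
exists (size (roots_in l F)); split=> //.
have [rooted_k size_k] := rooted_round injA (rooted_merge_subtrees rooted_F) k_gt0.
by apply: rooted_size1_connected rooted_k _; rewrite size_k iter_uphalf_eq1.
Qed.
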